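(* $\chi_i'(S_{C_4}^1)=2$ and $\chi_i'(S_{C_4}^n)=3$ for every integer $n\ge 2$, where $C_4$ is the cycle on $4$ vertices.
   Context: For a graph $H$ with at least one edge, an injective edge $k$-coloring is a map $c:E(H)\to\{1,\dots,k\}$ such that whenever $e_1=xy$, $e_2=yz$, $e_3=zu$ are edges of $H$ with $x,y,z$ distinct and $u\notin\{y,z\}$ (the case $u=x$ being allowed), we have $c(e_1)\ne c(e_3)$. The injective chromatic index $\chi_i'(H)$ is the least $k$ for which such a coloring exists. For a graph $G$ and positive integer $n$, the generalized Sierpiński graph $S_G^n$ has vertex set $V(G)^n$, and $(u_1,\dots,u_n)$, $(v_1,\dots,v_n)$ are adjacent if and only if there is $d\in\{1,\dots,n\}$ with $u_i=v_i$ for $i<d$, $u_dv_d\in E(G)$, and $u_i=v_d$, $v_i=u_d$ for all $i>d$. *)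

From mathcomp Require Import all_boot.
Set Implicit Arguments. Unset Strict Implicit. Unset Printing Implicit Defensive.

(* An edge xy is represented by the 2-element set [set x; y]; an edge
   k-colouring is a map from (edge) sets to 'I_k = {0,...,k-1}
   (only its values on edges matter). *)

Definition injective_edge_coloring (T : finType) (e : rel T) (k : nat)
  (c : {set T} -> 'I_k) : Prop :=
  forall x y z u : T, e x y -> e y z -> e z u ->
    x != y -> y != z -> x != z -> u != y -> u != z ->
    c [set x; y] != c [set z; u].

Definition inj_edge_colorable (T : finType) (e : rel T) (k : nat) : Prop :=
  exists c : {set T} -> 'I_k, injective_edge_coloring e c.

Definition inj_chromatic_index_is (T : finType) (e : rel T) (k : nat) : Prop :=
  inj_edge_colorable e k /\ (forall j, inj_edge_colorable e j -> k <= j).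

Definition sierpinski (V : finType) (G : rel V) (n : nat)
  : rel {ffun 'I_n -> V} :=
  fun u v => [exists d : 'I_n,
     [&& [forall i : 'I_n, (i < d) ==> (u i == v i)],
         G (u d) (v d) &
         [forall i : 'I_n, (d < i) ==> ((u i == v d) && (v i == u d))]]].

Definition C4 : rel 'I_4 :=
  fun x y => ((x.+1 %% 4) == y) || ((y.+1 %% 4) == x).

Arguments sierpinski {V} G n.

From mathcomp Require Import all_boot.
Set Implicit Arguments. Unset Strict Implicit. Unset Printing Implicit Defensive.

(* The colour given to an edge of S_C4^n (n >= 2) depends only on the last two
   letters of its ends.  Taking the last two letters is a locally injective
   homomorphism onto a 16-vertex graph, and the edges of S_C4^n changing the
   second-to-last letter form a matching, so the injectivity of the colouring
   reduces to a finite check.  Conversely, S_C4^2 embeds in S_C4^n by prefixing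
   a fixed letter, and S_C4^2 contains five edges whose conflicts form
   a 5-cycle, which rules out 2 colours.  S_C4^1 is C4 itself, where opposite
   edges conflict. *)

Section InjectiveEdgeColorings.
Variables (T : finType) (e : rel T).

Lemma inj_edge_colorableW j k :
  j <= k -> inj_edge_colorable e j -> inj_edge_colorable e k.
Proof.
move=> le_jk [c c_inj]; exists (fun S => widen_ord le_jk (c S)) => x y z u *.
by rewrite -val_eqE /= val_eqE c_inj.
Qed.

Lemma inj_chromatic_index_isS k :
  inj_edge_colorable e k.+1 -> ~ inj_edge_colorable e k ->
  inj_chromatic_index_is e k.+1.
Proof.
move=> col_k1 Ncol_k; split=> // j col_j; rewrite leqNgt; apply/negP => lt_j_k1.
by apply: Ncol_k; apply: inj_edge_colorableW col_j; rewrite -ltnS.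
Qed.

Lemma inj_edge_colorable_sub (T' : finType) (e' : rel T') (f : T -> T') k :
  injective f -> {homo f : x y / e x y >-> e' x y} ->
  inj_edge_colorable e' k -> inj_edge_colorable e k.
Proof.
move=> f_inj f_hom [c c_inj]; exists (fun S : {set T} => c (f @: S)).
move=> x y z u exy eyz ezu nxy nyz nxz nuy nuz.
by rewrite !imsetU1 !imset_set1 c_inj ?f_hom ?(inj_eq f_inj).
Qed.

(* [col] colours the edges through their ordered ends; it must separate the
   end edges of every path x-y-z-u, except at a vertex meeting two edges of
   [m] along the path. *)
Definition inj_pair_coloring (m : rel T) k (col : T -> T -> 'I_k) : Prop :=
  (forall x y, e x y -> col x y = col y x) /\
  (forall x y z u, e x y -> e y z -> e z u -> x != z -> u != y ->
     ~~ (m y x && m y z) -> ~~ (m z y && m z u) -> col x y != col z u).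

Definition inj_pair_coloringb (s : seq T) (m : rel T) k (col : T -> T -> 'I_k) :=
  all (fun x => all (fun y => e x y ==> (col x y == col y x)) s) s &&
  all (fun x => all (fun y => if e x y then all (fun z => if e y z then
    all (fun u => [==> e z u, x != z, u != y, ~~ (m y x && m y z),
                       ~~ (m z y && m z u) => col x y != col z u]) s
    else true) s else true) s) s.

Lemma inj_pair_coloringP (s : seq T) m k (col : T -> T -> 'I_k) :
  (forall x, x \in s) -> inj_pair_coloringb s m col -> inj_pair_coloring m col.
Proof.
move=> s_full /andP[/allP col_sym /allP col_inj].
split=> [x y exy | x y z u exy eyz ezu nxz nuy my mz].
  by move: col_sym => /(_ x (s_full x))/allP/(_ y (s_full y)); rewrite exy => /eqP.
move: col_inj => /(_ x (s_full x))/allP/(_ y (s_full y)).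
rewrite exy => /allP/(_ z (s_full z)); rewrite eyz => /allP/(_ u (s_full u)).
by rewrite ezu nxz nuy my mz.
Qed.

Lemma set2_eq (x y a b : T) :
  [set x; y] = [set a; b] -> (x = a /\ y = b) \/ (x = b /\ y = a).
Proof.
move=> xy_ab.
have /set2P[] : x \in [set a; b] by rewrite -xy_ab set21.
all: have /set2P[] : y \in [set a; b] by rewrite -xy_ab set22.
all: move=> ? ?; subst x y.
- have /set2P b_a : b \in [set a; a] by rewrite xy_ab set22.
  by left; case: b_a => ->.
- by left.
- by right.
- have /set2P a_b : a \in [set b; b] by rewrite xy_ab set21.
  by left; case: a_b => ->.
Qed.

Lemma inj_pair_coloring_colorable k (col : T -> T -> 'I_k.+1) :
  inj_pair_coloring (fun _ _ => false) col -> inj_edge_colorable e k.+1.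
Proof.
move=> [col_sym col_inj].
pose c S := if [pick p : T * T | (S == [set p.1; p.2]) && e p.1 p.2] is Some p
            then col p.1 p.2 else ord0.
have cE x y : e x y -> c [set x; y] = col x y.
  move=> exy; rewrite /c; case: pickP => [[a b] /= /andP[/eqP xy_ab eab] | no_pair].
    by have [[-> ->] | [-> ->]] := set2_eq xy_ab; rewrite // col_sym.
  by have := no_pair (x, y); rewrite /= eqxx exy.
exists c => x y z u exy eyz ezu _ _ nxz nuy _.
by rewrite !cE // col_inj.
Qed.

End InjectiveEdgeColorings.

Lemma inj_pair_coloring_comp (T T' : finType) (e : rel T) (e' m' : rel T')
    (f : T -> T') k (col : T' -> T' -> 'I_k) :
  symmetric e -> {homo f : x y / e x y >-> e' x y} ->
  (forall y x z, e y x -> e y z -> f x = f z -> x = z) ->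
  (forall y x z, e y x -> e y z -> m' (f y) (f x) -> m' (f y) (f z) -> x = z) ->
  inj_pair_coloring e' m' col ->
  inj_pair_coloring e (fun _ _ => false) (fun x y => col (f x) (f y)).
Proof.
move=> e_sym f_hom f_loc_inj m'_matching [col_sym col_inj].
split=> [x y exy | x y z u exy eyz ezu nxz nuy _ _]; first exact/col_sym/f_hom.
have eyx : e y x by rewrite e_sym.
have ezy : e z y by rewrite e_sym.
apply: col_inj; rewrite ?f_hom //.
- by apply: contra nxz => /eqP/(f_loc_inj y x z eyx eyz)->.
- by apply: contra nuy => /eqP/(f_loc_inj z u y ezu ezy)->.
- by apply: contra nxz => /andP[/(m'_matching y x z eyx eyz)] /[apply]->.
- by apply: contra nuy => /andP[/(m'_matching z y u ezy ezu)] /[apply]->.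
Qed.

Section Sierpinski.
Variables (V : finType) (G : rel V).

Definition sierpinski_edge_at n (x y : {ffun 'I_n -> V}) (d : 'I_n) : Prop :=
  [/\ forall i : 'I_n, i < d -> x i = y i, G (x d) (y d) &
      forall i : 'I_n, d < i -> x i = y d /\ y i = x d].

Lemma sierpinskiP n (x y : {ffun 'I_n -> V}) :
  reflect (exists d, sierpinski_edge_at x y d) (sierpinski G n x y).
Proof.
apply: (iffP existsP) => -[d].
  case/and3P=> /forallP below Gd /forallP above; exists d; split=> // i lt_id.
    by apply/eqP; move/implyP: (below i); apply.
  by move/implyP: (above i) => /(_ lt_id)/andP[/eqP-> /eqP->].
case=> below Gd above; exists d; apply/and3P; split=> //; apply/forallP=> i; apply/implyP.
  by move/below->.
by case/above=> -> ->; rewrite !eqxx.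
Qed.

Lemma sierpinski_sym n : symmetric G -> symmetric (sierpinski G n).
Proof.
move=> G_sym; apply: symmetric_from_pre => x y /sierpinskiP[d [below Gd above]].
apply/sierpinskiP; exists d; split=> [i /below-> // | | i /above[-> ->] //].
by rewrite G_sym.
Qed.

Lemma sierpinski1E (x y : {ffun 'I_1 -> V}) :
  sierpinski G 1 x y = G (x ord0) (y ord0).
Proof.
apply/sierpinskiP/idP => [[d [_ Gd _]] | Gxy]; first by rewrite -(ord1 d).
by exists ord0; split=> // -[[|i] lt_i1].
Qed.

Definition sierpinski_cons n (a : V) (x : {ffun 'I_n -> V}) : {ffun 'I_n.+1 -> V} :=
  [ffun i => if unlift ord0 i is Some j then x j else a].

Lemma sierpinski_cons_lift n a (x : {ffun 'I_n -> V}) (j : 'I_n) :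
  sierpinski_cons a x (lift ord0 j) = x j.
Proof. by rewrite ffunE liftK. Qed.

Lemma sierpinski_cons0 n a (x : {ffun 'I_n -> V}) : sierpinski_cons a x ord0 = a.
Proof. by rewrite ffunE unlift_none. Qed.

Lemma sierpinski_cons_inj n a : injective (@sierpinski_cons n a).
Proof.
move=> x y xy; apply/ffunP=> j.
by rewrite -(sierpinski_cons_lift a x) xy sierpinski_cons_lift.
Qed.

Lemma sierpinski_cons_hom n a :
  {homo @sierpinski_cons n a : x y / sierpinski G n x y >-> sierpinski G n.+1 x y}.
Proof.
move=> x y /sierpinskiP[d [below Gd above]]; apply/sierpinskiP.
exists (lift ord0 d); split=> [i | | i]; rewrite ?sierpinski_cons_lift //.
  case: (unliftP ord0 i) => [j ->|->]; last by rewrite !sierpinski_cons0.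
  by rewrite !lift0 ltnS !sierpinski_cons_lift => /below.
case: (unliftP ord0 i) => [j ->|->] //.
by rewrite !lift0 ltnS !sierpinski_cons_lift => /above.
Qed.

Lemma inj_edge_colorable_sierpinski_le (a : V) n m k : n <= m ->
  inj_edge_colorable (sierpinski G m) k -> inj_edge_colorable (sierpinski G n) k.
Proof.
elim: m => [|m IHm]; first by rewrite leqn0 => /eqP->.
rewrite leq_eqVlt ltnS => /orP[/eqP-> // | le_nm col_m1].
apply: IHm le_nm _; apply: inj_edge_colorable_sub col_m1.
  exact: sierpinski_cons_inj.
exact: sierpinski_cons_hom.
Qed.

Definition sierpinski2_vertex (a b : V) : {ffun 'I_2 -> V} :=
  [ffun i => if i == ord0 then a else b].

Lemma sierpinski2_vertex_neq a b a' b' :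
  (a != a') || (b != b') -> sierpinski2_vertex a b != sierpinski2_vertex a' b'.
Proof.
case/orP; apply: contra => /eqP/ffunP xy.
  by move: (xy ord0); rewrite !ffunE eqxx => ->.
by move: (xy ord_max); rewrite !ffunE /= => ->.
Qed.

Lemma sierpinski2_edge a b c d :
  ((a == c) && G b d) || [&& a == d, b == c & G a b] ->
  sierpinski G 2 (sierpinski2_vertex a b) (sierpinski2_vertex c d).
Proof.
move=> edge; apply/sierpinskiP.
case/orP: edge => [/andP[/eqP<- Gbd] | /and3P[/eqP<- /eqP<- Gab]].
  exists ord_max; split; rewrite ?ffunE //; case=> [[|[|i]] lt_i2] //.
  by rewrite !ffunE.
exists ord0; split; rewrite ?ffunE //.
by case=> [[|[|i]] lt_i2] //; rewrite !ffunE.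
Qed.

(* Images of the edges of S_G^(k+2) under [last_two]: edges inside a copy of G,
   the links (a,b)-(b,a) of S_G^2, and the links (a,a)-(c,c) between extreme
   vertices coming from deeper levels. *)
Definition sierpinski_tail : rel (V * V) := fun p q =>
  [|| (p.1 == q.1) && G p.2 q.2, [&& p.1 == q.2, p.2 == q.1 & G p.1 q.1]
    | [&& p.1 == p.2, q.1 == q.2 & G p.1 q.1]].

Definition last_two k (x : {ffun 'I_k.+2 -> V}) : V * V := (x (inord k), x ord_max).

Lemma ord_maxVlt n (i : 'I_n.+1) : i = ord_max \/ i < n.
Proof.
have := ltn_ord i; rewrite ltnS leq_eqVlt => /orP[/eqP i_n | ]; last by right.
by left; apply/val_inj.
Qed.

Lemma inord_k k : (inord k : 'I_k.+2) = k :> nat.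
Proof. by rewrite inordK. Qed.

Hypotheses (G_sym : symmetric G) (G_irr : irreflexive G).

Lemma G_neq a b : G a b -> a != b.
Proof. by apply: contraTneq => ->; rewrite G_irr. Qed.

Lemma sierpinski_edge_at_bridge n (y x : {ffun 'I_n.+1 -> V}) d :
  sierpinski_edge_at y x d -> d < n ->
  x d = y ord_max /\ forall i : 'I_n.+1, d < i -> y i = y ord_max.
Proof.
case=> _ _ above d_lt; have [y_max _] := above ord_max d_lt.
by split=> // i /above[-> _].
Qed.

Lemma sierpinski_bridge_unique n (y x z : {ffun 'I_n.+1 -> V}) d d' :
  sierpinski_edge_at y x d -> sierpinski_edge_at y z d' -> d < n -> d' < n ->
  x = z.
Proof.
move=> yx yz d_lt d'_lt.
have [xd y_above] := sierpinski_edge_at_bridge yx d_lt.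
have [zd' y_above'] := sierpinski_edge_at_bridge yz d'_lt.
have yd_neq : y d != y ord_max by case: yx => _ Gd _; rewrite -xd G_neq.
have yd'_neq : y d' != y ord_max by case: yz => _ Gd' _; rewrite -zd' G_neq.
have dd' : d = d'.
  apply/val_inj; case: (ltngtP d d') => // [/y_above | /y_above'] y_max.
    by rewrite y_max eqxx in yd'_neq.
  by rewrite y_max eqxx in yd_neq.
subst d'; case: yx yz => below _ above [below' _ above'].
apply/ffunP=> i; case: (ltngtP i d) => [lt_id | lt_di | /val_inj ->].
- by rewrite -below // below'.
- by have [_ ->] := above i lt_di; have [_ ->] := above' i lt_di.
- by rewrite xd zd'.
Qed.

Lemma sierpinski_bridge_neq k (y z : {ffun 'I_k.+2 -> V}) d :
  sierpinski_edge_at y z d -> d < k.+1 -> y (inord k) != z (inord k).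
Proof.
case=> _ Gd above; rewrite ltnS leq_eqVlt => /orP[/eqP d_k | d_lt].
  have -> : inord k = d by apply/val_inj; rewrite /= inord_k.
  exact: G_neq.
have lt_dk : d < (inord k : 'I_k.+2) by rewrite inord_k.
have [-> ->] := above _ lt_dk.
by rewrite eq_sym G_neq.
Qed.

Lemma sierpinski_cycle_eq k (y x : {ffun 'I_k.+2 -> V}) :
  sierpinski_edge_at y x ord_max -> y (inord k) = x (inord k).
Proof. by case=> below _ _; apply: below; rewrite inord_k /=. Qed.

Lemma last_two_hom k :
  {homo @last_two k : x y / sierpinski G k.+2 x y >-> sierpinski_tail x y}.
Proof.
move=> x y /sierpinskiP[d xy]; rewrite /sierpinski_tail /=.
case: (ord_maxVlt d) => [d_max | ].
  by subst d; rewrite (sierpinski_cycle_eq xy) eqxx; case: xy => _ ->.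
case: xy => _ Gd above; rewrite ltnS leq_eqVlt => /orP[/eqP d_k | d_lt].
  have kd : inord k = d by apply/val_inj; rewrite /= inord_k.
  have lt_d_max : d < k.+1 by rewrite d_k.
  have [-> ->] := above ord_max lt_d_max.
  by rewrite kd !eqxx Gd orbT.
have lt_dk : d < (inord k : 'I_k.+2) by rewrite inord_k.
have [-> ->] := above _ lt_dk.
have [-> ->] := above ord_max (ltn_trans d_lt (ltnSn k)).
by rewrite !eqxx G_sym Gd !orbT.
Qed.

Lemma last_two_locally_inj k (y x z : {ffun 'I_k.+2 -> V}) :
  sierpinski G k.+2 y x -> sierpinski G k.+2 y z -> last_two x = last_two z ->
  x = z.
Proof.
move=> /sierpinskiP[d yx] /sierpinskiP[d' yz] [x_k x_max].
case: (ord_maxVlt d) (ord_maxVlt d') => [d_max | d_lt] [d'_max | d'_lt]; subst.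
- case: yx yz => [below _ _] [below' _ _]; apply/ffunP=> i.
  by case: (ord_maxVlt i) => [-> // | i_lt]; rewrite -below // below'.
- by case/negP: (sierpinski_bridge_neq yz d'_lt); rewrite (sierpinski_cycle_eq yx) x_k.
- by case/negP: (sierpinski_bridge_neq yx d_lt); rewrite (sierpinski_cycle_eq yz) x_k.
- exact: sierpinski_bridge_unique yx yz d_lt d'_lt.
Qed.

Lemma last_two_bridge_unique k (y x z : {ffun 'I_k.+2 -> V}) :
  sierpinski G k.+2 y x -> sierpinski G k.+2 y z ->
  (last_two y).1 != (last_two x).1 -> (last_two y).1 != (last_two z).1 -> x = z.
Proof.
move=> /sierpinskiP[d yx] /sierpinskiP[d' yz] /= yx_k yz_k.
case: (ord_maxVlt d) => [d_max | d_lt].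
  by subst; rewrite (sierpinski_cycle_eq yx) eqxx in yx_k.
case: (ord_maxVlt d') => [d'_max | d'_lt].
  by subst; rewrite (sierpinski_cycle_eq yz) eqxx in yz_k.
exact: sierpinski_bridge_unique yx yz d_lt d'_lt.
Qed.

End Sierpinski.

Lemma C4_sym : symmetric C4.
Proof. by move=> a b; rewrite /C4 orbC. Qed.

Lemma C4_irr : irreflexive C4.
Proof. by case=> [[|[|[|[|a]]]] lt_a4]. Qed.

Definition C4_vertices : seq 'I_4 :=
  [:: ord0; Ordinal (isT : 1 < 4); Ordinal (isT : 2 < 4); ord_max].

Lemma mem_C4_vertices a : a \in C4_vertices.
Proof. by case: a => [[|[|[|[|a]]]] lt_a4]. Qed.

Lemma mem_C4_vertex_pairs p : p \in [seq (a, b) | a <- C4_vertices, b <- C4_vertices].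
Proof. by case: p => a b; apply: allpairs_f; apply: mem_C4_vertices. Qed.

(* Exactly one edge of each pair of opposite edges contains 0. *)
Definition C4_coloring (a b : 'I_4) : 'I_2 :=
  if ord0 \in [:: a; b] then ord_max else ord0.

Lemma C4_coloring_inj : inj_pair_coloring C4 (fun _ _ => false) C4_coloring.
Proof. by apply: (inj_pair_coloringP mem_C4_vertices); vm_compute. Qed.

Lemma C4_not_1_colorable : ~ inj_edge_colorable C4 1.
Proof.
move=> [c c_inj].
suff : c [set Ordinal (isT : 1 < 4); ord0] != c [set ord_max; Ordinal (isT : 2 < 4)].
  by rewrite !(ord1 (c _)).
by apply: c_inj.
Qed.

Definition C4_tail_coloring (p q : 'I_4 * 'I_4) : 'I_3 :=
  if p.1 == q.1 then
    if ~~ odd p.1 && (p.1 \in [:: p.2; q.2]) then ord_max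
    else widen_ord (isT : 2 <= 3) (C4_coloring p.2 q.2)
  else if p.1 == p.2 then ord_max
  else widen_ord (isT : 2 <= 3) (C4_coloring p.1 p.2).

Lemma C4_tail_coloring_inj :
  inj_pair_coloring (sierpinski_tail C4) (fun p q => p.1 != q.1) C4_tail_coloring.
Proof. by apply: (inj_pair_coloringP mem_C4_vertex_pairs); vm_compute. Qed.

Lemma sierpinski_C4_3_colorable k : inj_edge_colorable (sierpinski C4 k.+2) 3.
Proof.
apply: inj_pair_coloring_colorable.
apply: (inj_pair_coloring_comp (f := @last_two _ k)) C4_tail_coloring_inj.
- exact: sierpinski_sym C4_sym.
- exact: (last_two_hom C4_sym).
- exact: (last_two_locally_inj C4_irr).
- exact: (last_two_bridge_unique C4_irr).
Qed.

Lemma ord2_neq_neq (a b c : 'I_2) : a != b -> b != c -> a = c.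
Proof. by move: a b c => [[|[|?]] ?] [[|[|?]] ?] [[|[|?]] ?] //= _ _; apply/val_inj. Qed.

Local Notation v a b := (sierpinski2_vertex (@Ordinal 4 a isT) (@Ordinal 4 b isT)).

Lemma sierpinski2_C4_not_2_colorable : ~ inj_edge_colorable (sierpinski C4 2) 2.
Proof.
move=> [c c_inj].
have neq_5cycle (e1 e2 e3 e4 e5 : 'I_2) :
    e1 != e2 -> e2 != e3 -> e3 != e4 -> e4 != e5 -> e5 != e1 -> False.
  move=> n12 n23 n34 n45.
  by rewrite -(ord2_neq_neq n34 n45) -(ord2_neq_neq n12 n23) eqxx.
apply: (neq_5cycle (c [set v 1 0; v 0 1]) (c [set v 0 0; v 0 3])
          (c [set v 0 1; v 0 2]) (c [set v 1 0; v 1 1]) (c [set v 1 3; v 1 2])).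
2: rewrite eq_sym [[set v 0 0; _]]setUC.
3: rewrite [[set v 0 1; _]]setUC.
4: rewrite [[set v 1 0; _]]setUC.
5: rewrite eq_sym [[set v 1 0; _]]setUC.
all: by apply: c_inj; [apply: sierpinski2_edge | apply: sierpinski2_edge |
                       apply: sierpinski2_edge | apply: sierpinski2_vertex_neq ..].
Qed.

Lemma sierpinski1_C4_2_colorable : inj_edge_colorable (sierpinski C4 1) 2.
Proof.
apply: (inj_edge_colorable_sub (e' := C4) (f := fun x : {ffun 'I_1 -> 'I_4} => x ord0)).
- by move=> x y xy; apply/ffunP=> i; rewrite (ord1 i).
- by move=> x y; rewrite sierpinski1E.
exact: inj_pair_coloring_colorable C4_coloring_inj.
Qed.

Lemma sierpinski1_C4_not_1_colorable : ~ inj_edge_colorable (sierpinski C4 1) 1.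
Proof.
move=> col1; apply: C4_not_1_colorable.
apply: (inj_edge_colorable_sub (f := fun a => [ffun _ : 'I_1 => a])) col1.
- by move=> a b /ffunP/(_ ord0); rewrite !ffunE.
- by move=> a b; rewrite sierpinski1E !ffunE.
Qed.

Theorem mainTheorem7 :
  inj_chromatic_index_is (sierpinski C4 1) 2 /\
  (forall n : nat, 2 <= n -> inj_chromatic_index_is (sierpinski C4 n) 3).
Proof.
split.
  exact: inj_chromatic_index_isS sierpinski1_C4_2_colorable
                                 sierpinski1_C4_not_1_colorable.
case=> [|[|k]] // le2n.
apply: inj_chromatic_index_isS (sierpinski_C4_3_colorable k) _ => col2.
exact/sierpinski2_C4_not_2_colorable/(inj_edge_colorable_sierpinski_le ord0 le2n col2).
Qed.
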